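(* Let $v,w\colon\mathbb{R}^2\to\mathbb{R}$ and $u\colon\mathbb{R}\to\mathbb{R}$ be $C^\infty$ functions satisfying: (1) there exists $\delta>0$ such that $v$, $w$ and all their first partial derivatives are bounded on the set $\{(x,y)\colon x\in\mathbb{R},\ y\in(1-\delta,1+\delta)\cup(-1-\delta,-1+\delta)\}$; (2) there exists $a>0$ such that $w(x,1)>a$ and $w(x,-1)<-a$ for all $x\in\mathbb{R}$; (3) $u$ is $T$-periodic for some $T>0$ and $\frac1T\int_0^T u(t)\,dt=0$. For $\lambda\in\mathbb{R}$ consider the system $$\dot x=v(x,y),\qquad \dot y=w(x,y)+u(\lambda t).$$ Suppose that for every $\lambda$ all solutions of this system starting in the region $\{|y|\leqslant 1\}$ can be continued to all $t\geqslant 0$. Then there exists $\lambda_0>0$ such that for every $\lambda\geqslant\lambda_0$ the system has a solution $(x(t),y(t))$ with $|y(t)|<1$ for all $t\geqslant 0$.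
   Context: All functions are $C^\infty$ smooth. *)

From Stdlib Require Import Reals Lra List.
Open Scope R_scope.

Definition smooth1 (u : R -> R) : Prop :=
  exists D : nat -> R -> R,
    D O = u /\ forall n t, derivable_pt_lim (D n) t (D (S n) t).

Definition continuous2 (f : R -> R -> R) : Prop :=
  forall x y eps, 0 < eps -> exists d, 0 < d /\
    forall x' y', Rabs (x' - x) < d -> Rabs (y' - y) < d ->
      Rabs (f x' y' - f x y) < eps.

(* D l is the mixed partial along the word l
   (true = d/dx, false = d/dy), the head being the last derivative taken. *)
Definition smooth2 (v : R -> R -> R) : Prop :=
  exists D : list bool -> R -> R -> R,
    D nil = v /\
    (forall l x y,
        derivable_pt_lim (fun s => D l s y) x (D (true :: l) x y) /\
        derivable_pt_lim (fun s => D l x s) y (D (false :: l) x y)) /\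
    (forall l, continuous2 (D l)).

Definition deriv_nonneg (f : R -> R) (t l : R) : Prop :=
  forall eps, 0 < eps -> exists d, 0 < d /\
    forall h, h <> 0 -> Rabs h < d -> 0 <= t + h ->
      Rabs ((f (t + h) - f t) / h - l) < eps.

Definition is_solution (v w : R -> R -> R) (u : R -> R) (lam : R)
  (x y : R -> R) : Prop :=
  forall t, 0 <= t ->
    deriv_nonneg x t (v (x t) (y t)) /\
    deriv_nonneg y t (w (x t) (y t) + u (lam * t)).

Definition near_pm1 (delta y : R) : Prop :=
  (1 - delta < y < 1 + delta) \/ (-1 - delta < y < -1 + delta).

From Stdlib Require Import Reals Lra List ClassicalEpsilon Classical.
From Coquelicot Require Import Coquelicot.
Open Scope R_scope.

(* Let U be a primitive of u; it is bounded because u is periodic with zero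
   mean, say |U| < K.  Along a solution, z = y - U(lam t)/lam satisfies
   z' = w(x, y) and differs from y by less than K/lam.  For lam large, the levels
   z = +-(1 - 2K/lam) lie in the strips near y = +-1 where w points outwards,
   so z can cross them only outwards.  The initial values y(0) = p in
   [-(1 - 2K/lam), 1 - 2K/lam] whose z eventually exits above, resp. below,
   form two disjoint sets, relatively open by continuous dependence on p and
   containing one endpoint each; by connectedness some p never exits, and its
   solution keeps |y| < 1. *)

Lemma real_induction (a b : R) (P : R -> Prop) :
  a <= b -> P a ->
  (forall s, a <= s < b -> (forall r, a <= r <= s -> P r) ->
     exists h, 0 < h /\ forall r, s <= r <= s + h -> P r) ->
  (forall s, a < s <= b -> (forall r, a <= r < s -> P r) -> P s) ->
  forall r, a <= r <= b -> P r.
Proof.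
  intros Hab Pa Hright Hleft.
  set (E := fun s => a <= s <= b /\ forall r, a <= r <= s -> P r).
  assert (Ea : E a) by (split; [lra|]; intros r Hr; replace r with a by lra; exact Pa).
  destruct (completeness E) as [m [Hub Hlub]].
  { exists b; intros s [[_ Hs] _]; exact Hs. }
  { exists a; exact Ea. }
  assert (am : a <= m) by (apply Hub, Ea).
  assert (mb : m <= b) by (apply Hlub; intros s [[_ Hs] _]; exact Hs).
  assert (below : forall r, a <= r < m -> P r).
  { intros r Hr. apply NNPP; intro HPr.
    enough (m <= r) by lra.
    apply Hlub; intros s [_ Hs].
    destruct (Rle_or_lt s r) as [|Hsr]; [assumption|].
    exfalso; apply HPr, Hs; lra. }
  assert (upto_m : forall r, a <= r <= m -> P r).
  { intros r Hr. destruct (Req_dec r m) as [->|Hne]; [|apply below; lra].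
    destruct (Req_dec m a) as [->|]; [exact Pa|].
    apply Hleft; [lra|exact below]. }
  assert (m = b) as <-.
  { apply NNPP; intro Hne.
    destruct (Hright m ltac:(lra) upto_m) as [h [hp Hh]].
    enough (E (Rmin (m + h) b)) as Hmin.
    { specialize (Hub _ Hmin). unfold Rmin in Hub; destruct Rle_dec; lra. }
    split; [unfold Rmin; destruct Rle_dec; lra|].
    intros r Hr. destruct (Rle_or_lt r m); [apply upto_m; lra|].
    apply Hh; split; [lra|]. pose proof (Rmin_l (m + h) b); lra. }
  exact upto_m.
Qed.

Definition rel_open (a b : R) (A : R -> Prop) : Prop :=
  forall p, a <= p <= b -> A p ->
    exists eta, 0 < eta /\ forall q, a <= q <= b -> Rabs (q - p) < eta -> A q.

Lemma interval_connected (a b : R) (A B : R -> Prop) :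
  a <= b -> A a -> B b -> rel_open a b A -> rel_open a b B ->
  (forall p, a <= p <= b -> A p \/ B p) ->
  exists p, a <= p <= b /\ A p /\ B p.
Proof.
  intros Hab Aa Bb openA openB cover.
  apply NNPP; intro disjoint.
  assert (allA : forall r, a <= r <= b -> A r).
  { apply real_induction; [exact Hab|exact Aa|..].
    - intros s Hs IH. destruct (openA s ltac:(lra) (IH s ltac:(lra))) as [eta [etap Heta]].
      exists (Rmin (eta / 2) (b - s)). split; [apply Rmin_pos; lra|].
      intros r Hr. pose proof (Rmin_l (eta / 2) (b - s)). pose proof (Rmin_r (eta / 2) (b - s)).
      apply Heta; [lra|]. rewrite Rabs_right; lra.
    - intros s Hs IH. destruct (cover s ltac:(lra)) as [|Bs]; [assumption|].
      destruct (openB s ltac:(lra) Bs) as [eta [etap Heta]].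
      set (r := Rmax a (s - eta / 2)).
      assert (a <= r < s) by (unfold r, Rmax; destruct Rle_dec; lra).
      exfalso; apply disjoint; exists r. split; [lra|]. split; [apply IH; lra|].
      apply Heta; [lra|]. rewrite Rabs_left; unfold r, Rmax in *; destruct Rle_dec; lra. }
  apply disjoint; exists b. split; [lra|]. split; [apply allA; lra|exact Bb].
Qed.

Lemma interval_local_to_global (a b : R) (G : (R -> Prop) -> Prop) :
  a <= b ->
  (forall S1 S2 : R -> Prop, G S1 -> G S2 -> G (fun r => S1 r \/ S2 r)) ->
  (forall S1 S2 : R -> Prop, (forall r, S2 r -> S1 r) -> G S1 -> G S2) ->
  (forall s, a <= s <= b -> exists rho, 0 < rho /\ G (fun r => Rabs (r - s) < rho)) ->
  G (fun r => a <= r <= b).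
Proof.
  intros Hab Gunion Gsub Glocal.
  enough (H : forall r, a <= r <= b -> G (fun q => a <= q <= r)) by (apply H; lra).
  apply real_induction; [exact Hab|..].
  - destruct (Glocal a ltac:(lra)) as [rho [rhop Ga]].
    eapply Gsub; [|exact Ga]. intros q Hq. replace q with a by lra.
    rewrite Rminus_diag, Rabs_R0; exact rhop.
  - intros s Hs IH. destruct (Glocal s ltac:(lra)) as [rho [rhop Gs]].
    exists (rho / 2). split; [lra|]. intros r Hr.
    eapply Gsub; [|exact (Gunion _ _ (IH s ltac:(lra)) Gs)]. intros q Hq.
    destruct (Rle_or_lt q s); [left; lra|right; rewrite Rabs_right; lra].
  - intros s Hs IH. destruct (Glocal s ltac:(lra)) as [rho [rhop Gs]].
    set (r := Rmax a (s - rho / 2)).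
    assert (a <= r < s) by (unfold r, Rmax; destruct Rle_dec; lra).
    eapply Gsub; [|exact (Gunion _ _ (IH r ltac:(lra)) Gs)]. intros q Hq.
    destruct (Rle_or_lt q r); [left; lra|right].
    unfold Rabs; destruct Rcase_abs; unfold r, Rmax in *; destruct Rle_dec; lra.
Qed.

Lemma continuous2_bounded_on_rectangle (f : R -> R -> R) (a1 b1 a2 b2 : R) :
  continuous2 f -> a1 <= b1 -> a2 <= b2 ->
  exists M, forall x y, a1 <= x <= b1 -> a2 <= y <= b2 -> Rabs (f x y) <= M.
Proof.
  intros Hf H1 H2.
  assert (strip : forall x, exists rho M, 0 < rho /\
            forall x' y, Rabs (x' - x) < rho -> a2 <= y <= b2 -> Rabs (f x' y) <= M).
  { intro x.
    apply (interval_local_to_global a2 b2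
      (fun S => exists rho M, 0 < rho /\
         forall x' y, Rabs (x' - x) < rho -> S y -> Rabs (f x' y) <= M)).
    - exact H2.
    - intros S1 S2 [rho1 [M1 [rho1p H1']]] [rho2 [M2 [rho2p H2']]].
      exists (Rmin rho1 rho2), (Rmax M1 M2). split; [apply Rmin_pos; lra|].
      intros x' y Hx [Hy|Hy].
      + eapply Rle_trans; [apply H1'; [pose proof (Rmin_l rho1 rho2); lra|exact Hy]|apply Rmax_l].
      + eapply Rle_trans; [apply H2'; [pose proof (Rmin_r rho1 rho2); lra|exact Hy]|apply Rmax_r].
    - intros S1 S2 HS [rho [M [rhop HM]]]. exists rho, M. split; [exact rhop|].
      intros x' y Hx Hy. apply HM; auto.
    - intros s _. destruct (Hf x s 1 ltac:(lra)) as [d [dp Hd]].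
      exists d. split; [exact dp|]. exists d, (Rabs (f x s) + 1). split; [exact dp|].
      intros x' y Hx Hy. specialize (Hd x' y Hx Hy).
      pose proof (Rabs_triang_inv (f x' y) (f x s)). lra. }
  apply (interval_local_to_global a1 b1
    (fun S => exists M, forall x y, S x -> a2 <= y <= b2 -> Rabs (f x y) <= M)).
  - exact H1.
  - intros S1 S2 [M1 HM1] [M2 HM2]. exists (Rmax M1 M2). intros x y [Hx|Hx] Hy.
    + eapply Rle_trans; [apply HM1; assumption|apply Rmax_l].
    + eapply Rle_trans; [apply HM2; assumption|apply Rmax_r].
  - intros S1 S2 HS [M HM]. exists M. intros x y Hx Hy. apply HM; auto.
  - intros s _. destruct (strip s) as [rho [M [rhop HM]]].
    exists rho. split; [exact rhop|]. exists M. exact HM.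
Qed.

Lemma smooth2_C1 (f : R -> R -> R) : smooth2 f ->
  exists fx fy, continuous2 fx /\ continuous2 fy /\ forall x y,
    derivable_pt_lim (fun s => f s y) x (fx x y) /\
    derivable_pt_lim (fun s => f x s) y (fy x y).
Proof.
  intros [D [<- [HD Hc]]].
  exists (D (true :: nil)), (D (false :: nil)). auto.
Qed.

Lemma between_in_interval (a b x y s : R) :
  a <= x <= b -> a <= y <= b -> Rmin x y <= s <= Rmax x y -> a <= s <= b.
Proof. unfold Rmin, Rmax; destruct Rle_dec; lra. Qed.

Lemma abs_sub_le_of_deriv_bound (f f' : R -> R) (a b M : R) :
  (forall s, Rmin a b <= s <= Rmax a b -> derivable_pt_lim f s (f' s) /\ Rabs (f' s) <= M) ->
  Rabs (f b - f a) <= M * Rabs (b - a).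
Proof.
  intro H. destruct (MVT_abs f f' a b) as [c [-> Hc]]; [intros c Hc; apply H, Hc|].
  apply Rmult_le_compat_r; [apply Rabs_pos|apply H, Hc].
Qed.

Lemma smooth2_lipschitz_on_rectangle (f : R -> R -> R) (a1 b1 a2 b2 : R) :
  smooth2 f -> a1 <= b1 -> a2 <= b2 ->
  exists L, 0 <= L /\ forall x1 y1 x2 y2,
    a1 <= x1 <= b1 -> a2 <= y1 <= b2 -> a1 <= x2 <= b1 -> a2 <= y2 <= b2 ->
    Rabs (f x1 y1 - f x2 y2) <= L * (Rabs (x1 - x2) + Rabs (y1 - y2)).
Proof.
  intros Hf H1 H2.
  destruct (smooth2_C1 f Hf) as [fx [fy [cx [cy Hd]]]].
  destruct (continuous2_bounded_on_rectangle fx a1 b1 a2 b2 cx H1 H2) as [Mx HMx].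
  destruct (continuous2_bounded_on_rectangle fy a1 b1 a2 b2 cy H1 H2) as [My HMy].
  pose proof (Rabs_pos Mx). pose proof (Rabs_pos My).
  exists (Rabs Mx + Rabs My). split; [lra|].
  intros x1 y1 x2 y2 Hx1 Hy1 Hx2 Hy2.
  assert (Ex : Rabs (f x1 y1 - f x2 y1) <= Rabs Mx * Rabs (x1 - x2)).
  { apply (abs_sub_le_of_deriv_bound (fun s => f s y1) (fun s => fx s y1)).
    intros s Hs. split; [apply Hd|].
    eapply Rle_trans; [|apply Rle_abs].
    apply HMx; [exact (between_in_interval _ _ _ _ _ Hx2 Hx1 Hs)|exact Hy1]. }
  assert (Ey : Rabs (f x2 y1 - f x2 y2) <= Rabs My * Rabs (y1 - y2)).
  { apply (abs_sub_le_of_deriv_bound (fun s => f x2 s) (fun s => fy x2 s)).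
    intros s Hs. split; [apply Hd|].
    eapply Rle_trans; [|apply Rle_abs].
    apply HMy; [exact Hx2|exact (between_in_interval _ _ _ _ _ Hy2 Hy1 Hs)]. }
  replace (f x1 y1 - f x2 y2) with ((f x1 y1 - f x2 y1) + (f x2 y1 - f x2 y2)) by ring.
  pose proof (Rabs_triang (f x1 y1 - f x2 y1) (f x2 y1 - f x2 y2)).
  pose proof (Rabs_pos (x1 - x2)). pose proof (Rabs_pos (y1 - y2)).
  nra.
Qed.

Lemma deriv_nonneg_continuous (f : R -> R) (t l : R) : deriv_nonneg f t l ->
  forall eps, 0 < eps -> exists d, 0 < d /\
    forall h, Rabs h < d -> 0 <= t + h -> Rabs (f (t + h) - f t) < eps.
Proof.
  intros H eps He.
  destruct (H 1 ltac:(lra)) as [d0 [d0p Hd0]].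
  pose proof (Rabs_pos l).
  exists (Rmin d0 (eps / (Rabs l + 1))). split; [apply Rmin_pos; [lra|apply Rdiv_lt_0_compat; lra]|].
  intros h Hh Ht.
  destruct (Req_dec h 0) as [->|hn]; [rewrite Rplus_0_r, Rminus_diag, Rabs_R0; exact He|].
  pose proof (Rmin_l d0 (eps / (Rabs l + 1))). pose proof (Rmin_r d0 (eps / (Rabs l + 1))).
  specialize (Hd0 h hn ltac:(lra) Ht).
  set (q := (f (t + h) - f t) / h) in *.
  replace (f (t + h) - f t) with (q * h) by (unfold q; field; exact hn).
  rewrite Rabs_mult.
  assert (Rabs q < Rabs l + 1) by (pose proof (Rabs_triang_inv q l); lra).
  assert (Rabs h * (Rabs l + 1) < eps).
  { apply (Rmult_lt_reg_r (/ (Rabs l + 1))); [apply Rinv_0_lt_compat; lra|].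
    rewrite Rmult_assoc, Rinv_r by lra. lra. }
  pose proof (Rabs_pos h). pose proof (Rabs_pos q). nra.
Qed.

Lemma deriv_nonneg_minus (f g : R -> R) (t a b : R) :
  deriv_nonneg f t a -> deriv_nonneg g t b ->
  deriv_nonneg (fun s => f s - g s) t (a - b).
Proof.
  intros Hf Hg eps He.
  destruct (Hf (eps / 2) ltac:(lra)) as [d1 [d1p H1]].
  destruct (Hg (eps / 2) ltac:(lra)) as [d2 [d2p H2]].
  exists (Rmin d1 d2). split; [apply Rmin_pos; lra|].
  intros h hn Hh Ht. pose proof (Rmin_l d1 d2). pose proof (Rmin_r d1 d2).
  specialize (H1 h hn ltac:(lra) Ht). specialize (H2 h hn ltac:(lra) Ht).
  replace ((f (t + h) - g (t + h) - (f t - g t)) / h - (a - b))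
    with (((f (t + h) - f t) / h - a) - ((g (t + h) - g t) / h - b)) by (field; exact hn).
  eapply Rle_lt_trans; [apply Rabs_triang|]. rewrite Rabs_Ropp. lra.
Qed.

Lemma deriv_nonneg_opp (f : R -> R) (t a : R) :
  deriv_nonneg f t a -> deriv_nonneg (fun s => - f s) t (- a).
Proof.
  intros Hf eps He. destruct (Hf eps He) as [d [dp H]]. exists d. split; [exact dp|].
  intros h hn Hh Ht.
  replace ((- f (t + h) - - f t) / h - - a) with (- ((f (t + h) - f t) / h - a)) by (field; exact hn).
  rewrite Rabs_Ropp. exact (H h hn Hh Ht).
Qed.

Lemma deriv_nonneg_of_derivable_pt_lim (F G : R -> R) (t l : R) :
  0 <= t -> (forall s, 0 <= s -> F s = G s) ->
  derivable_pt_lim F t l -> deriv_nonneg G t l.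
Proof.
  intros Ht Heq H eps He. destruct (H eps He) as [d Hd].
  exists d. split; [apply cond_pos|]. intros h hn Hh Hth.
  rewrite <- !Heq by lra. exact (Hd h hn Hh).
Qed.

(* Extending [f] to the left by its tangent line at [0] turns a derivative
   relative to [0, +oo) into an ordinary one, so the calculus of
   [derivable_pt_lim] applies. *)
Definition extend_left (f : R -> R) (l t : R) : R :=
  if Rle_dec 0 t then f t else f 0 + l * t.

Lemma extend_left_nonneg (f : R -> R) (l t : R) : 0 <= t -> extend_left f l t = f t.
Proof. intro H; unfold extend_left; destruct Rle_dec; [reflexivity|lra]. Qed.

Lemma derivable_pt_lim_extend_left (f f' : R -> R) :
  (forall s, 0 <= s -> deriv_nonneg f s (f' s)) ->
  forall s, 0 <= s -> derivable_pt_lim (extend_left f (f' 0)) s (f' s).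
Proof.
  intros Hd s Hs eps He.
  destruct (Hd s Hs eps He) as [d [dp Hd']].
  destruct (Rle_lt_or_eq_dec 0 s Hs) as [Hpos|<-].
  - exists (mkposreal (Rmin d s) (Rmin_pos _ _ dp Hpos)). intros h hn Hh. simpl in Hh.
    pose proof (Rmin_l d s). pose proof (Rmin_r d s).
    assert (0 <= s + h) by (apply Rabs_def2 in Hh; lra).
    rewrite !extend_left_nonneg by lra. apply Hd'; lra.
  - exists (mkposreal d dp). intros h hn Hh. simpl in Hh.
    destruct (Rle_or_lt 0 h).
    + rewrite !extend_left_nonneg by lra. apply Hd'; lra.
    + unfold extend_left. destruct (Rle_dec 0 (0 + h)); [lra|]. destruct (Rle_dec 0 0); [|lra].
      replace ((f 0 + f' 0 * (0 + h) - f 0) / h - f' 0) with 0 by (field; lra).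
      rewrite Rabs_R0; exact He.
Qed.

Lemma deriv_nonneg_bounded (f f' : R -> R) (t : R) :
  0 <= t -> (forall s, 0 <= s -> deriv_nonneg f s (f' s)) ->
  exists B, forall s, 0 <= s <= t -> Rabs (f s) <= B.
Proof.
  intros Ht Hd.
  destruct (continuity_ab_maj (fun s => Rabs (extend_left f (f' 0) s)) 0 t Ht) as [m [Hm _]].
  { intros c Hc. apply (continuity_pt_comp _ Rabs); [|apply Rcontinuity_abs].
    apply derivable_continuous_pt. exists (f' c).
    apply derivable_pt_lim_extend_left; [exact Hd|lra]. }
  exists (Rabs (extend_left f (f' 0) m)). intros s Hs.
  rewrite <- (extend_left_nonneg f (f' 0) s) by lra. exact (Hm s Hs).
Qed.

Lemma deriv_nonneg_pos_increases (z : R -> R) (s l : R) :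
  0 <= s -> deriv_nonneg z s l -> 0 < l ->
  exists d, 0 < d /\ forall r, s < r <= s + d -> z s < z r.
Proof.
  intros Hs Hd Hl. destruct (Hd l Hl) as [d [dp Hd']].
  exists (d / 2). split; [lra|]. intros r Hr.
  specialize (Hd' (r - s) ltac:(apply Rgt_not_eq; lra) ltac:(rewrite Rabs_right; lra) ltac:(lra)).
  replace (s + (r - s)) with r in Hd' by ring.
  apply Rabs_def2 in Hd'.
  assert (0 < (z r - z s) / (r - s)) by lra.
  assert (0 < (z r - z s) / (r - s) * (r - s)) by (apply Rmult_lt_0_compat; lra).
  replace ((z r - z s) / (r - s) * (r - s)) with (z r - z s) in * by (field; lra).
  lra.
Qed.

Lemma deriv_nonneg_barrier (z l : R -> R) (c t1 t2 : R) :
  0 <= t1 ->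
  (forall s, t1 <= s <= t2 -> deriv_nonneg z s (l s)) ->
  (forall s, t1 <= s <= t2 -> z s = c -> 0 < l s) ->
  c <= z t1 -> forall t, t1 <= t <= t2 -> c <= z t.
Proof.
  intros Ht1 Hd Hl Hc t Ht.
  apply (real_induction t1 t2 (fun r => c <= z r)); try lra.
  - intros s Hs IH.
    destruct (Rle_lt_or_eq_dec c (z s) (IH s ltac:(lra))) as [Hgt|Heq].
    + destruct (deriv_nonneg_continuous _ _ _ (Hd s ltac:(lra)) (z s - c) ltac:(lra))
        as [d [dp Hd']].
      exists (d / 2). split; [lra|]. intros r Hr.
      specialize (Hd' (r - s) ltac:(rewrite Rabs_right; lra) ltac:(lra)).
      replace (s + (r - s)) with r in Hd' by ring.
      apply Rabs_def2 in Hd'. lra.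
    + destruct (deriv_nonneg_pos_increases z s (l s) ltac:(lra) (Hd s ltac:(lra))
                  (Hl s ltac:(lra) (eq_sym Heq))) as [d [dp Hd']].
      exists d. split; [exact dp|]. intros r Hr.
      destruct (Req_dec r s) as [->|Hne]; [lra|].
      pose proof (Hd' r ltac:(lra)). lra.
  - intros s Hs IH. apply Rnot_lt_le. intro Hlt.
    destruct (deriv_nonneg_continuous _ _ _ (Hd s ltac:(lra)) (c - z s) ltac:(lra))
      as [d [dp Hd']].
    set (r := Rmax t1 (s - d / 2)).
    assert (t1 <= r < s) by (unfold r, Rmax; destruct Rle_dec; lra).
    specialize (Hd' (r - s) ltac:(rewrite Rabs_left; unfold r, Rmax in *; destruct Rle_dec; lra)
                  ltac:(lra)).
    replace (s + (r - s)) with r in Hd' by ring.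
    specialize (IH r ltac:(lra)). apply Rabs_def2 in Hd'. lra.
Qed.

Lemma deriv_nonneg_stays_below (g l : R -> R) (c t : R) :
  0 <= t ->
  (forall s, 0 <= s <= t -> deriv_nonneg g s (l s)) ->
  (forall s, 0 <= s <= t -> g s < c -> l s <= 0) ->
  g 0 < c -> g t < c.
Proof.
  intros Ht Hd Hl Hg0.
  (* The slack [ep > 0] turns the non-strict sign condition on [l] into the
     strict one required by the barrier lemma. *)
  set (ep := (c - g 0) / (2 * (t + 1))).
  assert (ep_pos : 0 < ep) by (apply Rdiv_lt_0_compat; lra).
  assert (ep_t : g 0 + ep * t < c).
  { enough (ep * (2 * (t + 1)) = c - g 0) by nra. unfold ep; field; lra. }
  enough (0 <= g 0 + ep * t - g t) by lra.
  apply (deriv_nonneg_barrier (fun r => g 0 + ep * r - g r) (fun r => ep - l r) 0 0 t);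
    [lra| | |lra|lra].
  - intros s Hs. apply deriv_nonneg_minus; [|apply Hd; lra].
    apply (deriv_nonneg_of_derivable_pt_lim _ _ s ep ltac:(lra) (fun _ _ => eq_refl)).
    apply is_derive_Reals. auto_derive; [trivial|ring].
  - intros s Hs Hz. enough (l s <= 0) by lra. apply Hl; [lra|nra].
Qed.

Lemma deriv_nonneg_damped_energy (p q p' q' : R -> R) (k s : R) :
  (forall r, 0 <= r -> deriv_nonneg p r (p' r)) ->
  (forall r, 0 <= r -> deriv_nonneg q r (q' r)) -> 0 <= s ->
  deriv_nonneg (fun r => (p r * p r + q r * q r) * exp (k * r)) s
    ((2 * p s * p' s + 2 * q s * q' s + k * (p s * p s + q s * q s)) * exp (k * s)).
Proof.
  intros Hp Hq Hs.
  set (P := extend_left p (p' 0)). set (Q := extend_left q (q' 0)).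
  set (E := fun r => exp (k * r)).
  assert (dP := derivable_pt_lim_extend_left p p' Hp s Hs).
  assert (dQ := derivable_pt_lim_extend_left q q' Hq s Hs).
  assert (dE : derivable_pt_lim E s (k * exp (k * s))).
  { apply is_derive_Reals. unfold E. auto_derive; [trivial|ring]. }
  pose proof (derivable_pt_lim_mult _ _ s _ _
    (derivable_pt_lim_plus _ _ s _ _ (derivable_pt_lim_mult _ _ s _ _ dP dP)
                                     (derivable_pt_lim_mult _ _ s _ _ dQ dQ)) dE) as H.
  apply (deriv_nonneg_of_derivable_pt_lim ((P * P + Q * Q) * E)%F); [exact Hs| |].
  - intros r Hr. unfold mult_fct, plus_fct, P, Q, E.
    rewrite !(extend_left_nonneg _ _ r Hr). reflexivity.
  - refine (eq_ind _ (derivable_pt_lim _ s) H _ _).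
    unfold mult_fct, plus_fct, P, Q, E. rewrite !(extend_left_nonneg _ _ s Hs). ring.
Qed.

Lemma lipschitz_energy_estimate (p q dv dw Lv Lw : R) :
  0 <= Lv -> 0 <= Lw ->
  Rabs dv <= Lv * (Rabs p + Rabs q) -> Rabs dw <= Lw * (Rabs p + Rabs q) ->
  2 * p * dv + 2 * q * dw <= 4 * (Lv + Lw) * (p * p + q * q).
Proof.
  intros HLv HLw Hv Hw.
  assert (Hpv : p * dv <= Rabs p * Rabs dv) by (rewrite <- Rabs_mult; apply Rle_abs).
  assert (Hqw : q * dw <= Rabs q * Rabs dw) by (rewrite <- Rabs_mult; apply Rle_abs).
  assert (Hp2 : Rabs p * Rabs p = p * p) by (rewrite <- Rabs_mult; apply Rabs_right, Rle_ge, Rle_0_sqr).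
  assert (Hq2 : Rabs q * Rabs q = q * q) by (rewrite <- Rabs_mult; apply Rabs_right, Rle_ge, Rle_0_sqr).
  pose proof (Rabs_pos p). pose proof (Rabs_pos q).
  pose proof (Rabs_pos dv). pose proof (Rabs_pos dw).
  assert (Rabs p * Rabs dv <= Rabs p * (Lv * (Rabs p + Rabs q))) by (apply Rmult_le_compat_l; lra).
  assert (Rabs q * Rabs dw <= Rabs q * (Lw * (Rabs p + Rabs q))) by (apply Rmult_le_compat_l; lra).
  pose proof (Rle_0_sqr (Rabs p - Rabs q)); unfold Rsqr in *.
  nra.
Qed.

Definition solves (v w : R -> R -> R) (f x y : R -> R) : Prop :=
  forall s, 0 <= s ->
    deriv_nonneg x s (v (x s) (y s)) /\ deriv_nonneg y s (w (x s) (y s) + f s).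

Lemma abs_lt_of_sq_lt (x e : R) : 0 < e -> x * x < e * e -> Rabs x < e.
Proof. intros He H. apply Rabs_def1; nra. Qed.

Lemma solves_bounded (v w : R -> R -> R) (f x y : R -> R) (t : R) :
  solves v w f x y -> 0 <= t ->
  exists B, 0 <= B /\ forall s, 0 <= s <= t -> Rabs (x s) <= B /\ Rabs (y s) <= B.
Proof.
  intros Hs Ht.
  destruct (deriv_nonneg_bounded x _ t Ht (fun s Hs' => proj1 (Hs s Hs'))) as [Bx HBx].
  destruct (deriv_nonneg_bounded y _ t Ht (fun s Hs' => proj2 (Hs s Hs'))) as [By HBy].
  pose proof (Rle_abs Bx). pose proof (Rle_abs By). pose proof (Rabs_pos Bx). pose proof (Rabs_pos By).
  exists (Rabs Bx + Rabs By). split; [lra|].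
  intros s Hs'. specialize (HBx s Hs'). specialize (HBy s Hs'). lra.
Qed.

Lemma smooth2_lipschitz_near_path (f : R -> R -> R) (x1 y1 : R -> R) (t B : R) :
  smooth2 f -> 0 <= B -> (forall s, 0 <= s <= t -> Rabs (x1 s) <= B /\ Rabs (y1 s) <= B) ->
  exists L, 0 <= L /\ forall s x y, 0 <= s <= t -> Rabs (x - x1 s) < 1 -> Rabs (y - y1 s) < 1 ->
    Rabs (f x y - f (x1 s) (y1 s)) <= L * (Rabs (x - x1 s) + Rabs (y - y1 s)).
Proof.
  intros Hf HB Hpath.
  destruct (smooth2_lipschitz_on_rectangle f (- (B + 1)) (B + 1) (- (B + 1)) (B + 1) Hf
              ltac:(lra) ltac:(lra)) as [L [HL0 HL]].
  exists L. split; [exact HL0|]. intros s x y Hs Hx Hy.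
  destruct (Hpath s Hs) as [Hx1 Hy1].
  apply Rabs_le_between in Hx1, Hy1. apply Rabs_lt_between in Hx, Hy.
  apply HL; lra.
Qed.

Lemma lt_of_damped_lt (E A k s t : R) :
  k <= 0 -> s <= t -> 0 <= E -> E * exp (k * s) < A * exp (k * t) -> E < A.
Proof.
  intros Hk Hst HE H.
  assert (exp (k * t) <= exp (k * s)).
  { assert (Hkt : k * t <= k * s) by nra.
    destruct (Rle_lt_or_eq_dec _ _ Hkt) as [Hlt|Heq];
      [left; apply exp_increasing, Hlt|rewrite Heq; lra]. }
  pose proof (exp_pos (k * t)). nra.
Qed.

(* Gronwall through the weighted energy [|P2 - P1|^2 exp (-4 L s)], which cannot
   increase as long as it is small enough to keep the second solution in the
   unit neighbourhood of the first one on which [v] and [w] are [L]-Lipschitz. *)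
Lemma solves_continuous_dependence (v w : R -> R -> R) (f x1 y1 : R -> R) (t : R) :
  smooth2 v -> smooth2 w -> 0 <= t -> solves v w f x1 y1 ->
  forall eps, 0 < eps -> exists eta, 0 < eta /\ forall x2 y2, solves v w f x2 y2 ->
    Rabs (x2 0 - x1 0) < eta -> Rabs (y2 0 - y1 0) < eta -> Rabs (y2 t - y1 t) < eps.
Proof.
  intros sv sw Ht s1 eps Heps.
  destruct (solves_bounded v w f x1 y1 t s1 Ht) as [B [HB0 HB]].
  destruct (smooth2_lipschitz_near_path v x1 y1 t B sv HB0 HB) as [Lv [Lv_nonneg HLv]].
  destruct (smooth2_lipschitz_near_path w x1 y1 t B sw HB0 HB) as [Lw [Lw_nonneg HLw]].
  set (k := - (4 * (Lv + Lw))).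
  set (e1 := Rmin eps 1).
  assert (e1_pos : 0 < e1) by (apply Rmin_pos; lra).
  pose proof (Rmin_l eps 1) as e1_eps. pose proof (Rmin_r eps 1) as e1_1. fold e1 in e1_eps, e1_1.
  set (c := e1 * e1 * exp (k * t)).
  assert (c_pos : 0 < c) by (unfold c; apply Rmult_lt_0_compat; [nra|apply exp_pos]).
  exists (Rmin 1 (c / 4)). split; [apply Rmin_pos; lra|].
  intros x2 y2 s2 Hx0 Hy0.
  pose proof (Rmin_l 1 (c / 4)). pose proof (Rmin_r 1 (c / 4)).
  set (p := fun r => x2 r - x1 r). set (q := fun r => y2 r - y1 r).
  set (e := fun r => p r * p r + q r * q r).
  assert (small : forall s, 0 <= s <= t -> e s * exp (k * s) < c -> e s < e1 * e1).
  { intros s Hs Hg. apply (lt_of_damped_lt _ _ k s t); [unfold k; lra|lra|unfold e; nra|exact Hg]. }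
  enough (Hgt : e t * exp (k * t) < c).
  { assert (Hq : q t * q t < e1 * e1)
      by (specialize (small t ltac:(lra) Hgt); unfold e in small; nra).
    apply abs_lt_of_sq_lt in Hq; [unfold q in Hq; lra|exact e1_pos]. }
  apply (deriv_nonneg_stays_below (fun r => e r * exp (k * r))
    (fun s => (2 * p s * (v (x2 s) (y2 s) - v (x1 s) (y1 s))
             + 2 * q s * ((w (x2 s) (y2 s) + f s) - (w (x1 s) (y1 s) + f s))
             + k * e s) * exp (k * s))); [exact Ht| | |].
  - intros s Hs. unfold e.
    apply (deriv_nonneg_damped_energy p q (fun r => v (x2 r) (y2 r) - v (x1 r) (y1 r))
      (fun r => (w (x2 r) (y2 r) + f r) - (w (x1 r) (y1 r) + f r))); [| |lra].
    + intros r Hr. apply deriv_nonneg_minus; [apply s2|apply s1]; exact Hr.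
    + intros r Hr. apply deriv_nonneg_minus; [apply s2|apply s1]; exact Hr.
  - intros s Hs Hg. specialize (small s Hs Hg).
    assert (Hp : Rabs (p s) < 1) by (apply abs_lt_of_sq_lt; unfold e in small; nra).
    assert (Hq : Rabs (q s) < 1) by (apply abs_lt_of_sq_lt; unfold e in small; nra).
    pose proof (HLv s (x2 s) (y2 s) Hs Hp Hq) as Hv. pose proof (HLw s (x2 s) (y2 s) Hs Hp Hq) as Hw.
    replace (w (x2 s) (y2 s) + f s - (w (x1 s) (y1 s) + f s))
      with (w (x2 s) (y2 s) - w (x1 s) (y1 s)) by ring.
    pose proof (lipschitz_energy_estimate (p s) (q s) _ _ Lv Lw Lv_nonneg Lw_nonneg Hv Hw).
    pose proof (exp_pos (k * s)). unfold e, k in *. nra.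
  - rewrite Rmult_0_r, exp_0, Rmult_1_r. unfold e, p, q.
    apply Rabs_lt_between in Hx0, Hy0. nra.
Qed.

Lemma periodic_bounded_nonneg (f : R -> R) (T C : R) :
  0 < T -> (forall s, f (s + T) = f s) -> (forall s, 0 <= s <= T -> Rabs (f s) <= C) ->
  forall s, 0 <= s -> Rabs (f s) <= C.
Proof.
  intros HT Hper HC.
  assert (ind : forall (n : nat) s, 0 <= s <= INR n * T -> Rabs (f s) <= C).
  { induction n as [|n IH]; intros s Hs.
    - apply HC. simpl in Hs. lra.
    - rewrite S_INR in Hs. destruct (Rle_or_lt s T); [apply HC; lra|].
      replace s with ((s - T) + T) by ring. rewrite Hper. apply IH. lra. }
  intros s Hs.
  destruct (archimed_cor1 (T / (s + 1))) as [n [Hn n_pos]]; [apply Rdiv_lt_0_compat; lra|].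
  apply (ind n). split; [exact Hs|].
  assert (0 < INR n) by (apply lt_0_INR; exact n_pos).
  apply (Rmult_lt_compat_r (INR n * (s + 1))) in Hn; [|nra].
  field_simplify in Hn; lra.
Qed.

Lemma zero_mean_periodic_primitive (u : R -> R) (T : R) :
  0 < T -> (forall s, continuity_pt u s) -> (forall s, u (s + T) = u s) -> RInt u 0 T = 0 ->
  exists U, U 0 = 0 /\ (forall s, derivable_pt_lim U s (u s)) /\
    exists C, forall s, 0 <= s -> Rabs (U s) <= C.
Proof.
  intros HT Hu Hper Hmean.
  set (U := fun s => RInt u 0 s).
  assert (dU : forall s, derivable_pt_lim U s (u s)).
  { intro s. apply is_derive_Reals, (is_derive_RInt u U 0 s).
    - apply filter_forall. intro r. apply (RInt_correct (V := R_CompleteNormedModule)).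
      apply ex_RInt_continuous. intros; apply continuity_pt_filterlim, Hu.
    - apply continuity_pt_filterlim, Hu. }
  assert (U0 : U 0 = 0) by (unfold U; rewrite RInt_point; reflexivity).
  exists U. split; [exact U0|]. split; [exact dU|].
  assert (Uper : forall s, U (s + T) = U s).
  { intro s.
    assert (Hh : Rabs ((U (s + T) - U s) - (U (0 + T) - U 0)) <= 0 * Rabs (s - 0)).
    { apply (abs_sub_le_of_deriv_bound (fun r => U (r + T) - U r) (fun _ => 0)).
      intros r _. split; [|rewrite Rabs_R0; lra].
      replace 0 with (u (r + T) * 1 - u r) by (rewrite Hper; ring).
      apply derivable_pt_lim_minus; [|apply dU].
      apply (derivable_pt_lim_comp (fun r => r + T) U); [|apply dU].
      apply is_derive_Reals. auto_derive; [trivial|ring]. }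
    rewrite Rplus_0_l, U0, (Hmean : U T = 0), Rmult_0_l in Hh.
    apply Rabs_le_between in Hh. lra. }
  destruct (continuity_ab_maj (fun s => Rabs (U s)) 0 T) as [m [Hm _]]; [lra|..].
  { intros c _. apply (continuity_pt_comp U Rabs); [|apply Rcontinuity_abs].
    apply derivable_continuous_pt. exists (u c). apply dU. }
  exists (Rabs (U m)). exact (periodic_bounded_nonneg U T _ HT Uper Hm).
Qed.

(* A one-dimensional version of Wazewski's retract principle. *)
Section Exit.

Variables (b : R) (z zd : R -> R -> R).
Hypothesis b_pos : 0 < b.
Hypothesis z_start : forall p, - b <= p <= b -> z p 0 = p.
Hypothesis z_deriv : forall p t, - b <= p <= b -> 0 <= t -> deriv_nonneg (z p) t (zd p t).
Hypothesis zd_top : forall p t, - b <= p <= b -> 0 <= t -> z p t = b -> 0 < zd p t.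
Hypothesis zd_bot : forall p t, - b <= p <= b -> 0 <= t -> z p t = - b -> zd p t < 0.
Hypothesis z_continuous : forall p t eps, - b <= p <= b -> 0 <= t -> 0 < eps ->
  exists eta, 0 < eta /\ forall q, - b <= q <= b -> Rabs (q - p) < eta -> Rabs (z q t - z p t) < eps.

Definition exits_above (p : R) : Prop := exists t, 0 <= t /\ b < z p t.
Definition exits_below (p : R) : Prop := exists t, 0 <= t /\ z p t < - b.

Lemma stays_above (p t1 t : R) : - b <= p <= b -> 0 <= t1 -> b <= z p t1 -> t1 <= t -> b <= z p t.
Proof.
  intros Hp Ht1 Hz Ht.
  apply (deriv_nonneg_barrier (z p) (zd p) b t1 t); auto; try lra.
  - intros s Hs. apply z_deriv; [exact Hp|lra].
  - intros s Hs. apply zd_top; [exact Hp|lra].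
Qed.

Lemma stays_below (p t1 t : R) : - b <= p <= b -> 0 <= t1 -> z p t1 <= - b -> t1 <= t -> z p t <= - b.
Proof.
  intros Hp Ht1 Hz Ht.
  enough (b <= - z p t) by lra.
  apply (deriv_nonneg_barrier (fun s => - z p s) (fun s => - zd p s) b t1 t); auto; try lra.
  - intros s Hs. apply deriv_nonneg_opp, z_deriv; [exact Hp|lra].
  - intros s Hs Hz'. enough (zd p s < 0) by lra. apply zd_bot; [exact Hp|lra|lra].
Qed.

Lemma exits_above_below_disjoint (p : R) : - b <= p <= b -> exits_above p -> exits_below p -> False.
Proof.
  intros Hp [t1 [Ht1 H1]] [t2 [Ht2 H2]].
  pose proof (stays_above p t1 (Rmax t1 t2) Hp Ht1 ltac:(lra) (Rmax_l t1 t2)).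
  pose proof (stays_below p t2 (Rmax t1 t2) Hp Ht2 ltac:(lra) (Rmax_r t1 t2)).
  lra.
Qed.

Lemma exits_above_top : exits_above b.
Proof.
  assert (Hb : - b <= b <= b) by lra.
  destruct (deriv_nonneg_pos_increases (z b) 0 (zd b 0) (Rle_refl 0) (z_deriv b 0 Hb (Rle_refl 0))
              (zd_top b 0 Hb (Rle_refl 0) (z_start b Hb))) as [d [dp Hd]].
  exists d. split; [lra|]. specialize (Hd d ltac:(lra)). rewrite (z_start _ Hb) in Hd. exact Hd.
Qed.

Lemma exits_below_bottom : exits_below (- b).
Proof.
  assert (Hb : - b <= - b <= b) by lra.
  destruct (deriv_nonneg_pos_increases (fun s => - z (- b) s) 0 (- zd (- b) 0) (Rle_refl 0)
              (deriv_nonneg_opp _ _ _ (z_deriv (- b) 0 Hb (Rle_refl 0)))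
              ltac:(pose proof (zd_bot (- b) 0 Hb (Rle_refl 0) (z_start _ Hb)); lra)) as [d [dp Hd]].
  exists d. split; [lra|]. specialize (Hd d ltac:(lra)). rewrite (z_start _ Hb) in Hd. lra.
Qed.

Lemma exits_above_open : rel_open (- b) b exits_above.
Proof.
  intros p Hp [t [Ht Hz]].
  destruct (z_continuous p t (z p t - b) Hp Ht ltac:(lra)) as [eta [etap Heta]].
  exists eta. split; [exact etap|]. intros q Hq Hqp.
  exists t. split; [exact Ht|]. specialize (Heta q Hq Hqp). apply Rabs_lt_between in Heta. lra.
Qed.

Lemma exits_below_open : rel_open (- b) b exits_below.
Proof.
  intros p Hp [t [Ht Hz]].
  destruct (z_continuous p t (- b - z p t) Hp Ht ltac:(lra)) as [eta [etap Heta]].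
  exists eta. split; [exact etap|]. intros q Hq Hqp.
  exists t. split; [exact Ht|]. specialize (Heta q Hq Hqp). apply Rabs_lt_between in Heta. lra.
Qed.

Lemma exists_trapped : exists p, - b <= p <= b /\ forall t, 0 <= t -> - b <= z p t <= b.
Proof.
  apply NNPP; intro Hnone.
  destruct (interval_connected (- b) b exits_below exits_above) as [p [Hp [Hbelow Habove]]];
    [lra|exact exits_below_bottom|exact exits_above_top|
     exact exits_below_open|exact exits_above_open| |].
  - intros p Hp. apply NNPP; intro Hno. apply Hnone. exists p. split; [exact Hp|].
    intros t Ht. split; apply Rnot_lt_le; intro Hlt; apply Hno; [left|right]; exists t; auto.
  - exact (exits_above_below_disjoint p Hp Habove Hbelow).
Qed.

End Exit.

Lemma sign_near_pm1 (w wy : R -> R -> R) (delta M a e : R) :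
  (forall x y, derivable_pt_lim (fun s => w x s) y (wy x y)) ->
  (forall x y, near_pm1 delta y -> Rabs (wy x y) <= M) ->
  (forall x, w x 1 > a /\ w x (-1) < - a) ->
  0 < e <= delta -> M * e < a ->
  forall x y, (1 - e < y <= 1 -> 0 < w x y) /\ (-1 <= y < -1 + e -> w x y < 0).
Proof.
  intros Hwy HM Ha He HMe x y.
  assert (M_nonneg : 0 <= M).
  { eapply Rle_trans; [apply Rabs_pos|apply (HM x 1)]. left; lra. }
  destruct (Ha x) as [Htop Hbot].
  split; intro Hy.
  - assert (H : Rabs (w x 1 - w x y) <= M * Rabs (1 - y)).
    { apply (abs_sub_le_of_deriv_bound (fun s => w x s) (wy x)).
      intros s Hs. split; [apply Hwy|]. apply HM. left.
      unfold Rmin, Rmax in Hs; destruct Rle_dec; lra. }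
    rewrite (Rabs_right (1 - y)) in H by lra. apply Rabs_le_between in H. nra.
  - assert (H : Rabs (w x y - w x (-1)) <= M * Rabs (y - -1)).
    { apply (abs_sub_le_of_deriv_bound (fun s => w x s) (wy x)).
      intros s Hs. split; [apply Hwy|]. apply HM. right.
      unfold Rmin, Rmax in Hs; destruct Rle_dec; lra. }
    rewrite (Rabs_right (y - -1)) in H by lra. apply Rabs_le_between in H. nra.
Qed.

Section Forced.

Variables (v w : R -> R -> R) (f F : R -> R) (eps : R) (X Y : R -> R -> R).
Hypothesis v_smooth : smooth2 v.
Hypothesis w_smooth : smooth2 w.
Hypothesis F_deriv : forall s, derivable_pt_lim F s (f s).
Hypothesis F_zero : F 0 = 0.
Hypothesis F_small : forall s, 0 <= s -> Rabs (F s) < eps.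
Hypothesis eps_small : 3 * eps < 1.
Hypothesis w_top : forall x y, 1 - 3 * eps < y <= 1 -> 0 < w x y.
Hypothesis w_bot : forall x y, -1 <= y < -1 + 3 * eps -> w x y < 0.
Hypothesis XY_solution : forall p, Rabs p <= 1 ->
  X p 0 = 0 /\ Y p 0 = p /\ solves v w f (X p) (Y p).

Lemma shifted_deriv (p t : R) : Rabs p <= 1 -> 0 <= t ->
  deriv_nonneg (fun s => Y p s - F s) t (w (X p t) (Y p t)).
Proof.
  intros Hp Ht. destruct (XY_solution p Hp) as [_ [_ Hs]].
  replace (w (X p t) (Y p t)) with (w (X p t) (Y p t) + f t - f t) by ring.
  apply deriv_nonneg_minus; [apply Hs, Ht|].
  exact (deriv_nonneg_of_derivable_pt_lim F F t (f t) Ht (fun _ _ => eq_refl) (F_deriv t)).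
Qed.

Lemma shifted_continuous (p t e : R) : Rabs p <= 1 -> 0 <= t -> 0 < e ->
  exists eta, 0 < eta /\ forall q, Rabs q <= 1 -> Rabs (q - p) < eta ->
    Rabs ((Y q t - F t) - (Y p t - F t)) < e.
Proof.
  intros Hp Ht He. destruct (XY_solution p Hp) as [Hx0 [Hy0 Hs]].
  destruct (solves_continuous_dependence v w f (X p) (Y p) t v_smooth w_smooth Ht Hs e He)
    as [eta [etap Heta]].
  exists eta. split; [exact etap|]. intros q Hq Hqp.
  destruct (XY_solution q Hq) as [Hx0' [Hy0' Hs']].
  replace (Y q t - F t - (Y p t - F t)) with (Y q t - Y p t) by ring.
  apply (Heta (X q) (Y q) Hs').
  - rewrite Hx0, Hx0', Rminus_diag, Rabs_R0. exact etap.
  - rewrite Hy0, Hy0'. exact Hqp.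
Qed.

Lemma trapped_solution :
  exists x y, solves v w f x y /\ forall t, 0 <= t -> Rabs (y t) < 1.
Proof.
  assert (eps_pos : 0 < eps) by (pose proof (F_small 0 (Rle_refl 0)); pose proof (Rabs_pos (F 0)); lra).
  assert (in_unit : forall p, - (1 - 2 * eps) <= p <= 1 - 2 * eps -> Rabs p <= 1).
  { intros p Hp. apply Rabs_le_between. lra. }
  destruct (exists_trapped (1 - 2 * eps) (fun p t => Y p t - F t) (fun p t => w (X p t) (Y p t)))
    as [p [Hp Hz]]; [lra| | | | | |].
  - intros p Hp. destruct (XY_solution p (in_unit p Hp)) as [_ [Hy0 _]].
    rewrite Hy0, F_zero. ring.
  - intros p t Hp Ht. exact (shifted_deriv p t (in_unit p Hp) Ht).
  - intros p t Hp Ht Hz. apply w_top.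
    pose proof (F_small t Ht) as HF. apply Rabs_lt_between in HF. lra.
  - intros p t Hp Ht Hz. apply w_bot.
    pose proof (F_small t Ht) as HF. apply Rabs_lt_between in HF. lra.
  - intros p t e Hp Ht He.
    destruct (shifted_continuous p t e (in_unit p Hp) Ht He) as [eta [etap Heta]].
    exists eta. split; [exact etap|]. intros q Hq. exact (Heta q (in_unit q Hq)).
  - exists (X p), (Y p). split; [exact (proj2 (proj2 (XY_solution p (in_unit p Hp))))|].
    intros t Ht. specialize (Hz t Ht). pose proof (F_small t Ht) as HF.
    apply Rabs_lt_between in HF. apply Rabs_lt_between. lra.
Qed.

End Forced.

Lemma choice_on (A B : Type) (P : A -> Prop) (Q : A -> B -> Prop) :
  inhabited B -> (forall a, P a -> exists b, Q a b) ->
  exists g : A -> B, forall a, P a -> Q a (g a).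
Proof.
  intros [b0] H. apply (choice (fun a b => P a -> Q a b)). intro a.
  destruct (classic (P a)) as [Ha|Ha].
  - destruct (H a Ha) as [b Hb]. exists b. intros _. exact Hb.
  - exists b0. intro; contradiction.
Qed.

Lemma eventually_div_lt (c r : R) : 0 <= c -> 0 < r ->
  exists l0, 0 < l0 /\ forall l, l >= l0 -> c / l < r.
Proof.
  intros Hc Hr. exists (c / r + 1).
  assert (0 <= c / r) by (apply Rdiv_le_0_compat; lra).
  split; [lra|]. intros l Hl.
  apply (Rmult_lt_reg_r l); [lra|]. unfold Rdiv. rewrite Rmult_assoc, Rinv_l by lra.
  assert (c = c / r * r) by (field; lra). nra.
Qed.

Lemma eventually_ratio_small (c delta a M : R) : 0 < c -> 0 < delta -> 0 < a ->
  exists l0, 0 < l0 /\ forall l, l >= l0 -> (0 < c / l <= delta /\ c / l < 1) /\ M * (c / l) < a.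
Proof.
  intros Hc Hdelta Ha.
  pose proof (Rabs_pos M). pose proof (Rle_abs M).
  pose proof (Rmin_l (Rmin delta 1) (a / (Rabs M + 1))).
  pose proof (Rmin_r (Rmin delta 1) (a / (Rabs M + 1))).
  pose proof (Rmin_l delta 1). pose proof (Rmin_r delta 1).
  set (r := Rmin (Rmin delta 1) (a / (Rabs M + 1))) in *.
  assert (r_pos : 0 < r) by (apply Rmin_pos; [apply Rmin_pos|apply Rdiv_lt_0_compat]; lra).
  destruct (eventually_div_lt c r ltac:(lra) r_pos) as [l0 [l0_pos Hl0]].
  exists l0. split; [exact l0_pos|]. intros l Hl. specialize (Hl0 l Hl).
  assert (0 < c / l) by (apply Rdiv_lt_0_compat; lra).
  split; [lra|].
  assert (c / l * (Rabs M + 1) < a).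
  { apply (Rmult_lt_reg_r (/ (Rabs M + 1))); [apply Rinv_0_lt_compat; lra|].
    rewrite Rmult_assoc, Rinv_r by lra. fold (a / (Rabs M + 1)). lra. }
  nra.
Qed.

Lemma smooth1_continuity (u : R -> R) : smooth1 u -> forall s, continuity_pt u s.
Proof. intros [D [<- HD]] s. apply derivable_continuous_pt. exists (D 1%nat s). apply HD. Qed.

Lemma rescaled_primitive (u U : R -> R) (lam C : R) :
  0 < lam -> U 0 = 0 -> (forall s, derivable_pt_lim U s (u s)) ->
  (forall s, 0 <= s -> Rabs (U s) <= C) ->
  / lam * U (lam * 0) = 0 /\
  (forall s, derivable_pt_lim (fun r => / lam * U (lam * r)) s (u (lam * s))) /\
  (forall s, 0 <= s -> Rabs (/ lam * U (lam * s)) < (Rabs C + 1) / lam).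
Proof.
  intros Hlam U0 dU HC. split; [rewrite Rmult_0_r, U0; ring|]. split.
  - intro s. replace (u (lam * s)) with (/ lam * (u (lam * s) * lam)) by (field; lra).
    apply derivable_pt_lim_scal, (derivable_pt_lim_comp (fun r => lam * r) U); [|apply dU].
    apply is_derive_Reals. auto_derive; [trivial|ring].
  - intros s Hs. rewrite Rabs_mult, Rabs_inv, (Rabs_right lam) by lra.
    unfold Rdiv. rewrite Rmult_comm. apply Rmult_lt_compat_r; [apply Rinv_0_lt_compat; lra|].
    pose proof (HC (lam * s) ltac:(nra)). pose proof (Rle_abs C). lra.
Qed.

Theorem theorem2p3 (v w : R -> R -> R) (u : R -> R) :
  smooth2 v -> smooth2 w -> smooth1 u ->
  (exists delta M, 0 < delta /\
     forall x y, near_pm1 delta y ->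
       Rabs (v x y) <= M /\ Rabs (w x y) <= M /\
       (forall l, derivable_pt_lim (fun s => v s y) x l -> Rabs l <= M) /\
       (forall l, derivable_pt_lim (fun s => v x s) y l -> Rabs l <= M) /\
       (forall l, derivable_pt_lim (fun s => w s y) x l -> Rabs l <= M) /\
       (forall l, derivable_pt_lim (fun s => w x s) y l -> Rabs l <= M)) ->
  (exists a, 0 < a /\ forall x, w x 1 > a /\ w x (-1) < - a) ->
  (exists T, 0 < T /\ (forall t, u (t + T) = u t) /\
     exists pr : Riemann_integrable u 0 T, / T * RiemannInt pr = 0) ->
  (forall lam x0 y0, Rabs y0 <= 1 ->
     exists x y, x 0 = x0 /\ y 0 = y0 /\ is_solution v w u lam x y) ->
  exists lam0, 0 < lam0 /\
    forall lam, lam >= lam0 ->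
      exists x y, is_solution v w u lam x y /\
        forall t, 0 <= t -> Rabs (y t) < 1.
Proof.
  intros sv sw su [delta [M [delta_pos HM]]] [a [a_pos Ha]] [T [T_pos [Hper [pr Hmean]]]] Hglob.
  destruct (zero_mean_periodic_primitive u T T_pos (smooth1_continuity u su) Hper)
    as [U [U0 [dU [C HC]]]].
  { rewrite (RInt_Reals u 0 T pr). apply (Rmult_eq_reg_l (/ T)); [lra|].
    apply Rinv_neq_0_compat; lra. }
  destruct (smooth2_C1 w sw) as [wx [wy [_ [_ Hwy]]]].
  assert (wy_bound : forall x y, near_pm1 delta y -> Rabs (wy x y) <= M).
  { intros x y Hy. destruct (HM x y Hy) as (_ & _ & _ & _ & _ & Hl). apply Hl, Hwy. }
  set (K := Rabs C + 1).
  destruct (eventually_ratio_small (3 * K) delta a M) as [lam0 [lam0_pos Hlam0]];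
    [unfold K; pose proof (Rabs_pos C); lra|exact delta_pos|exact a_pos|].
  exists lam0. split; [exact lam0_pos|]. intros lam Hlam.
  destruct (rescaled_primitive u U lam C ltac:(lra) U0 dU HC) as [F0 [dF HF]].
  destruct (Hlam0 lam Hlam) as [[eps_delta eps_1] HMe].
  rewrite <- Rmult_div_assoc in eps_delta, eps_1, HMe.
  pose proof (sign_near_pm1 w wy delta M a (3 * (K / lam)) (fun x y => proj2 (Hwy x y))
    wy_bound Ha eps_delta HMe) as Hsign.
  destruct (choice_on R ((R -> R) * (R -> R)) (fun p => Rabs p <= 1)
    (fun p xy => fst xy 0 = 0 /\ snd xy 0 = p /\ is_solution v w u lam (fst xy) (snd xy))
    (inhabits (fun _ => 0, fun _ => 0))) as [XY HXY].
  { intros p Hp. destruct (Hglob lam 0 p Hp) as [x [y Hxy]]. exists (x, y). exact Hxy. }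
  exact (trapped_solution v w (fun s => u (lam * s)) (fun s => / lam * U (lam * s)) (K / lam)
    (fun p => fst (XY p)) (fun p => snd (XY p)) sv sw dF F0 HF eps_1
    (fun x y => proj1 (Hsign x y)) (fun x y => proj2 (Hsign x y)) HXY).
Qed.
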